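(* Let $C_1,\dots,C_K$ be $K\ge 2$ initial clusters (disjoint groups of users) and let $\alpha\in(0,1)$. Suppose a notion of ''similarity'' between clusters (including clusters formed as unions of the $C_i$) is given which is merge-invariant: whenever $A$, $B$, $D$ are clusters that are pairwise similar, $A$ is similar to the merged cluster $B\cup D$. Consider the following procedure. Set $C^{(0)}_i=C_i$ for $1\le i\le K$ and $b=0$. At iteration $b$ (with current clusters $C^{(b)}_1,\dots,C^{(b)}_{K-b}$), for every pair $i\neq j$ compute a p-value $\hat p^{(b)}_{i,j}$ for the hypothesis $H^{(b)}_{i,j}$: ''$C^{(b)}_i$ is similar to $C^{(b)}_j$''. If $\hat p^{(b)}_{i,j}<\alpha/K$ for all pairs $i\neq j$, stop, reject the null hypothesis, and report $C^{(b)}_1,\dots,C^{(b)}_{K-b}$ as disparate clusters. Otherwise merge the two clusters with the largest p-value $\hat p^{(b)}_{i,j}$ into one cluster, yielding clusters $C^{(b+1)}_1,\dots,C^{(b+1)}_{K-b-1}$, set $b\leftarrow b+1$ and repeat (if only one cluster remains, stop without rejecting). Assume the p-values are valid (i.e. whenever $H^{(b)}_{i,j}$ is true, $P(\hat p^{(b)}_{i,j}\le t)\le t$ for all $t\in[0,1]$) and are independent of the previous decisions to merge clusters (so this validity holds conditionally on the merge history). Then: (1) if the null hypothesis $H_0$: ''$C_i$ is similar to $C_j$ for all $i\neq j$, $1\le i,j\le K$'' is true, the probability that the procedure rejects $H_0$ is at most $\alpha$; and (2) the probability that the procedure rejects and reports clusters $C^{(b)}_1,\dots,C^{(b)}_{K-b}$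 as disparate when in fact at least one pair of these reported clusters is similar is at most $\alpha$.
   Context: A ''cluster'' is a set of users formed as a union of some of the initial groups $C_1,\dots,C_K$. ''Similarity'' is an arbitrary pre-specified binary relation between clusters (e.g. equal treatment effect, equal lift, or equality of a fairness metric), assumed to satisfy the merge-invariance property stated in the claim. A p-value for a hypothesis is a statistic taking values in $[0,1]$. *)

From HB Require Import structures.
From mathcomp Require Import all_boot all_order all_algebra.
From mathcomp Require Import all_classical all_reals all_analysis.
Set Implicit Arguments. Unset Strict Implicit. Unset Printing Implicit Defensive.
Import Order.TTheory GRing.Theory Num.Theory.
Local Open Scope ring_scope.

(* Clusters are identified with the set of indices i of the initial groups
   C_i whose union they are: a cluster is an element of {set 'I_K}. *)

Inductive status := Running | Rejected | Accepted.

Section Procedure.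
Variables (K : nat) (R : realType) (alpha : R) (T : Type).
(* p b A B w : the p-value \hat p^{(b)} at iteration b for the hypothesis
   "cluster A is similar to cluster B", at the outcome w *)
Variable p : nat -> {set 'I_K} -> {set 'I_K} -> T -> R.

Definition initial_clusters : {set {set 'I_K}} := [set [set i] | i : 'I_K].

Definition all_below (b : nat) (S : {set {set 'I_K}}) (w : T) : bool :=
  [forall A in S, forall B in S, (A != B) ==> (p b A B w < alpha / K%:R)].

Definition merge_pair (b : nat) (S : {set {set 'I_K}}) (w : T)
  : {set 'I_K} * {set 'I_K} :=
  Order.arg_max (finset.set0, finset.set0)
    (fun AB => (AB.1 \in S) && (AB.2 \in S) && (AB.1 != AB.2))
    (fun AB => p b AB.1 AB.2 w).

Definition merge (S : {set {set 'I_K}}) (AB : {set 'I_K} * {set 'I_K})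
  : {set {set 'I_K}} :=
  ((S :\ AB.1) :\ AB.2) :|: [set AB.1 :|: AB.2].

Fixpoint config (b : nat) (w : T) : {set {set 'I_K}} * status :=
  match b with
  | 0 => (initial_clusters, Running)
  | b'.+1 =>
      let c := config b' w in
      match c.2 with
      | Running =>
          let S := c.1 in
          if (#|S| <= 1)%N then (S, Accepted)
          else if all_below b' S w then (S, Rejected)
          else (merge S (merge_pair b' S w), Running)
      | _ => c
      end
  end.

Definition history (b : nat) (w : T) : seq ({set {set 'I_K}} * status) :=
  mkseq (fun k => config k w) b.+1.

(* the procedure runs at most K iterations (at most K-1 merges), so this is
   its terminal configuration *)
Definition final (w : T) : {set {set 'I_K}} * status := config K w.

End Procedure.

(* A rejection happens at a single iteration b, and it is false when some
   pair of similar current clusters has a p-value below alpha/K there.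
   Conditionally on the merge history up to b, which determines the current
   clusters, validity bounds the probability of this by alpha/K; averaging over
   the finitely many histories keeps the bound, and a union bound over the at
   most K iterations gives alpha.  Under H0, merge invariance keeps the current
   clusters pairwise similar, so every rejection is false and (1) follows
   from (2).  All events involved are measurable because each iteration depends
   on the outcome only through finitely many comparisons of p-values. *)

From Pilot Require Import Defs.
From HB Require Import structures.
From mathcomp Require Import all_boot all_order all_algebra.
From mathcomp Require Import all_classical all_reals all_analysis.
From mathcomp Require Import measurable_realfun.
Import Order.TTheory GRing.Theory Num.Theory.
Local Open Scope classical_set_scope.
Local Open Scope ring_scope.
Set Implicit Arguments. Unset Strict Implicit. Unset Printing Implicit Defensive.

Definition status_to_option (s : status) : option bool :=
  match s with Running => None | Rejected => Some true | Accepted => Some false end.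
Definition option_to_status (o : option bool) : status :=
  match o with None => Running | Some true => Rejected | Some false => Accepted end.
Lemma status_to_optionK : cancel status_to_option option_to_status.
Proof. by case. Qed.
HB.instance Definition _ := Finite.copy status (can_type status_to_optionK).

Section FiberMeasurable.
Context d (T : measurableType d).

Definition fiber_measurable (Y : Type) (f : T -> Y) :=
  forall y, measurable (f @^-1` [set y]).

Lemma fiber_measurable_cst (Y : Type) (y0 : Y) : fiber_measurable (fun _ : T => y0).
Proof.
move=> y; have [<-|y0_neq_y] := pselect (y0 = y).
  by rewrite preimage_cst ifT //; apply/mem_set.
by rewrite preimage_cst ifF //; apply/negbTE/negP => /set_mem.
Qed.

Lemma fiber_measurable_preimage (Y : finType) (f : T -> Y) (A : set Y) :
  fiber_measurable f -> measurable (f @^-1` A).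
Proof.
move=> mf; have -> : f @^-1` A = \bigcup_(y in A) f @^-1` [set y].
  by apply/seteqP; split => [w Afw|w [y Ay /= ->]] //; exists (f w).
by apply: fin_bigcup_measurable => // y _; exact: mf.
Qed.

Lemma fiber_measurable_comp (Y : finType) (Z : Type) (g : Y -> Z) (f : T -> Y) :
  fiber_measurable f -> fiber_measurable (g \o f).
Proof. by move=> mf z; rewrite comp_preimage; exact: fiber_measurable_preimage. Qed.

Lemma fiber_measurable_inj_comp (Y Z : Type) (g : Y -> Z) (f : T -> Y) :
  injective g -> fiber_measurable f -> fiber_measurable (g \o f).
Proof.
move=> g_inj mf z; have [[y <-]|no_y] := pselect (exists y, g y = z).
  have -> : (g \o f) @^-1` [set g y] = f @^-1` [set y].
    by apply/seteqP; split => w /= => [/g_inj|->].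
  exact: mf.
have -> : (g \o f) @^-1` [set z] = set0.
  by apply/seteqP; split => // w /= gfw; apply: no_y; exists (f w).
exact: measurable0.
Qed.

Lemma fiber_measurable_pair (Y Z : Type) (f : T -> Y) (g : T -> Z) :
  fiber_measurable f -> fiber_measurable g ->
  fiber_measurable (fun w => (f w, g w)).
Proof.
move=> mf mg [y z]; have -> : (fun w => (f w, g w)) @^-1` [set (y, z)] =
    f @^-1` [set y] `&` g @^-1` [set z].
  by apply/seteqP; split => w /= => [[-> ->]|[-> ->]].
exact: measurableI.
Qed.

Lemma fiber_measurable_ffun (X : finType) (Y : Type) (f : X -> T -> Y) :
  (forall x, fiber_measurable (f x)) ->
  fiber_measurable (fun w => [ffun x => f x w]).
Proof.
move=> mf g; have -> : (fun w => [ffun x => f x w]) @^-1` [set g] =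
    \bigcap_(x in [set: X]) f x @^-1` [set g x].
  apply/seteqP; split => w /= => [<- x _|fg]; first by rewrite ffunE.
  by apply/ffunP => x; rewrite ffunE; exact: fg.
by apply: fin_bigcap_measurable => // x _; exact: mf.
Qed.

Lemma fiber_measurable_bool (f : T -> bool) :
  measurable_fun [set: T] f -> fiber_measurable f.
Proof. by move=> mf b; rewrite -[_ @^-1` _]setTI; exact: mf. Qed.

End FiberMeasurable.

Section ConditioningOnFibers.
Context d (T : measurableType d) (R : realType) (P : probability T R).
Local Open Scope ereal_scope.

Lemma probability_le_fibers (Y : choiceType) (f : T -> Y) (E : set T) (c : R) :
  finite_set (range f) -> fiber_measurable f -> measurable E -> (0 <= c)%R ->
  (forall y, P (E `&` f @^-1` [set y]) <= c%:E * P (f @^-1` [set y])) ->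
  P E <= c%:E.
Proof.
move=> fin_f mf mE c_ge0 fiber_le.
have partition (F : set T) : F = \bigcup_(y in range f) (F `&` f @^-1` [set y]).
  by apply/seteqP; split => [w Fw|w [y _ []//]]; exists (f w) => //; exists w.
have triv (F : set T) : trivIset (range f) (fun y => F `&` f @^-1` [set y]).
  by move=> y z _ _ [w [[_ <-] [_ <-]]].
rewrite [E]partition measure_fin_bigcup //; last by move=> y _; exact: measurableI.
apply: le_trans (lee_fsum fin_f (fun y _ => fiber_le y)) _.
rewrite -ge0_mule_fsumr //.
under eq_fsbigr => y do rewrite -[f @^-1` _]setTI.
rewrite -measure_fin_bigcup //; last by move=> y _; exact: measurableI.
rewrite -(partition setT) -[leRHS]mule1 lee_wpmul2l ?lee_fin //.
exact: probability_le1.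
Qed.

End ConditioningOnFibers.

Lemma arg_max_default (I : finType) (disp : Order.disp_t) (O : orderType disp)
    (i0 i1 : I) (P : pred I) (F : I -> O) :
  P i1 -> Order.arg_max i0 P F = Order.arg_max i1 P F.
Proof.
move=> Pi1; rewrite /Order.arg_max /extremum; case: pickP => //= no_max.
have [k Pk k_max] := arg_maxP F Pi1.
have := no_max k; rewrite /= Pk /=.
suff -> : [forall (j | P j), (F j <= F k)%O] by [].
by apply/forall_inP => j /k_max.
Qed.

Section Procedure.
Variables (K : nat) (R : realType) (alpha : R) (T : Type).
Variable p : nat -> {set 'I_K} -> {set 'I_K} -> T -> R.
Local Notation config := (config alpha p).
Local Notation history := (history alpha p).
Local Notation cluster_pair := ({set 'I_K} * {set 'I_K})%type.

Definition distinct_pair (S : {set {set 'I_K}}) (AB : cluster_pair) :=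
  (AB.1 \in S) && (AB.2 \in S) && (AB.1 != AB.2).

Lemma merge_pairP b (S : {set {set 'I_K}}) w :
  (1 < #|S|)%N -> distinct_pair S (merge_pair p b S w).
Proof.
move=> /card_gt1P [A [B [AS BS AB]]].
have AB_distinct : distinct_pair S (A, B) by rewrite /distinct_pair /= AS BS AB.
by rewrite /merge_pair (arg_max_default _ _ AB_distinct); case: arg_maxP.
Qed.

Lemma all_belowP b (S : {set {set 'I_K}}) w A B :
  all_below alpha p b S w -> A \in S -> B \in S -> A != B ->
  p b A B w < alpha / K%:R.
Proof.
move=> /forall_inP below AS BS AB.
by move: (below A AS) => /forall_inP /(_ B BS) /implyP; apply.
Qed.

Definition comparison := (cluster_pair * cluster_pair + cluster_pair)%type.

Definition compare_pvalues b (x : comparison) w : bool :=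
  match x with
  | inl (AB, CD) => p b CD.1 CD.2 w <= p b AB.1 AB.2 w
  | inr AB => p b AB.1 AB.2 w < alpha / K%:R
  end.

(* [merge_pair] is the [extremum] taken in [step] for the comparisons
   [compare_pvalues], so that [configS] holds by conversion. *)
Definition step (c : {set {set 'I_K}} * status) (v : comparison -> bool) :=
  match c.2 with
  | Running =>
      let S := c.1 in
      if (#|S| <= 1)%N then (S, Accepted)
      else if [forall A in S, forall B in S, (A != B) ==> v (inr (A, B))]
      then (S, Rejected)
      else (Defs.merge S (extremum (fun AB CD => v (inl (AB, CD)))
              (finset.set0, finset.set0) (distinct_pair S) id), Running)
  | _ => c
  end.

Lemma configS b w : config b.+1 w = step (config b w) (compare_pvalues b ^~ w).
Proof. by []. Qed.

Lemma config_rejected_step b w :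
  (config b w).2 = Running -> (config b.+1 w).2 = Rejected ->
  [/\ (config b.+1 w).1 = (config b w).1, (1 < #|(config b w).1|)%N
    & all_below alpha p b (config b w).1 w].
Proof.
rewrite [config b.+1 w]/=; case: (config b w) => S s /= ->.
by case: ifP => // S_le1; case: ifP => // below _; rewrite ltnNge S_le1.
Qed.

Lemma config_stopped n w :
  (config n w).2 != Running -> config n.+1 w = config n w.
Proof. by rewrite [config n.+1 w]/=; case: (config n w) => S []. Qed.

Lemma rejection_time n w : (config n w).2 = Rejected ->
  exists2 b, (b < n)%N & [/\ (config b w).2 = Running,
    (config b.+1 w).2 = Rejected & config n w = config b.+1 w].
Proof.
elim: n => [//|n IH]; have [run rej|stopped] := eqVneq (config n w).2 Running.
  by exists n.
rewrite config_stopped // => /IH [b bn [run rej ->]].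
by exists b; [exact: ltnW|split].
Qed.

Lemma historyS b w : history b.+1 w = rcons (history b w) (config b.+1 w).
Proof. by rewrite /Defs.history mkseqS. Qed.

Lemma last_history x0 b w : last x0 (history b w) = config b w.
Proof. by rewrite /Defs.history mkseqS last_rcons. Qed.

Lemma finite_range_history b : finite_set (range (history b)).
Proof.
apply: (sub_finite_set (B := @tval b.+1 _ @` [set: (b.+1).-tuple _])).
  move=> _ [w _ <-]; have size_history : size (history b w) == b.+1.
    by rewrite size_mkseq.
  by exists (Tuple size_history).
exact/finite_image/finite_finset.
Qed.

Section Similarity.
Variable sim : {set 'I_K} -> {set 'I_K} -> bool.
Hypothesis simC : forall A B, sim A B = sim B A.
Hypothesis sim_merge :
  forall A B D, sim A B -> sim A D -> sim B D -> sim A (B :|: D).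

Definition pairwise_similar (S : {set {set 'I_K}}) :=
  forall A B, A \in S -> B \in S -> A != B -> sim A B.

Lemma pairwise_similar_merge (S : {set {set 'I_K}}) AB :
  pairwise_similar S -> distinct_pair S AB -> pairwise_similar (Defs.merge S AB).
Proof.
case: AB => A0 B0 simS /andP[/andP[A0S B0S] A0B0].
have sim_merged C : C \in S :\ A0 :\ B0 -> sim C (A0 :|: B0).
  by rewrite !inE => /and3P[CB0 CA0 CS]; apply: sim_merge; apply: simS.
move=> A B; rewrite !inE => /orP[A_old|/eqP->] /orP[B_old|/eqP->] AB.
- by apply: simS; [case/and3P: A_old|case/and3P: B_old|].
- by apply: sim_merged; rewrite !inE.
- by rewrite simC; apply: sim_merged; rewrite !inE.
- by rewrite eqxx in AB.
Qed.

Lemma config_pairwise_similar :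
  pairwise_similar (initial_clusters K) ->
  forall b w, pairwise_similar (config b w).1.
Proof.
move=> sim0; elim=> [//|b IH] w; have := IH w.
rewrite [config b.+1 w]/=; case: (config b w) => S [] //= simS.
case: ifP => // S_le1; case: ifP => // _.
apply: pairwise_similar_merge => //; apply: merge_pairP.
by rewrite ltnNge S_le1.
Qed.

End Similarity.
End Procedure.

Section Measurability.
Context (K : nat) (R : realType) (alpha : R) (d : measure_display) (T : measurableType d).
Variable p : nat -> {set 'I_K} -> {set 'I_K} -> T -> R.
Hypothesis p_meas : forall b A B, measurable_fun [set: T] (p b A B).
Local Notation config := (config alpha p).
Local Notation history := (history alpha p).

Lemma fiber_measurable_config b : fiber_measurable (config b).
Proof.
elim: b => [|b IH]; first exact: fiber_measurable_cst.
have -> : config b.+1 =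
    (fun cv : _ * {ffun comparison K -> bool} => step cv.1 cv.2) \o
    (fun w => (config b w, [ffun x => compare_pvalues alpha p b x w])).
  apply/funext => w; rewrite configS; congr step.
  by apply/funext => x; rewrite ffunE.
apply/fiber_measurable_comp/fiber_measurable_pair => //.
apply: fiber_measurable_ffun => -[[AB CD]|AB]; apply: fiber_measurable_bool.
  exact: measurable_fun_ler.
exact: measurable_fun_ltr.
Qed.

Lemma fiber_measurable_history b : fiber_measurable (history b).
Proof.
elim: b => [|b IH].
  exact: (fiber_measurable_cst _ [:: (initial_clusters K, Running)]).
have -> : history b.+1 = (fun hc => rcons hc.1 hc.2) \o
    (fun w => (history b w, config b.+1 w)).
  by apply/funext => w; rewrite /= historyS.
apply: fiber_measurable_inj_comp; first by move=> [h c] [h' c'] /rcons_inj.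
by apply: fiber_measurable_pair IH _; exact: fiber_measurable_config.
Qed.

Lemma measurable_final (A : set ({set {set 'I_K}} * status)) :
  measurable (final alpha p @^-1` A).
Proof. exact/fiber_measurable_preimage/fiber_measurable_config. Qed.

End Measurability.

Section FalseRejection.
Context (K : nat) (R : realType) (alpha : R) (d : measure_display) (T : measurableType d).
Variables (P : probability T R) (sim : {set 'I_K} -> {set 'I_K} -> bool).
Variable p : nat -> {set 'I_K} -> {set 'I_K} -> T -> R.
Hypothesis K_gt0 : (0 < K)%N.
Hypothesis alpha01 : 0 <= alpha <= 1.
Hypothesis p_meas : forall b A B, measurable_fun [set: T] (p b A B).
Hypothesis p_valid :
  forall (b : nat) (h : seq ({set {set 'I_K}} * status)) (A B : {set 'I_K}) (t : R),
     (last (initial_clusters K, Running) h).2 = Running ->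
     A \in (last (initial_clusters K, Running) h).1 ->
     B \in (last (initial_clusters K, Running) h).1 ->
     A != B -> sim A B -> 0 <= t <= 1 ->
     (P ([set w | (p b A B w <= t)%R] `&` [set w | history alpha p b w = h])
       <= t%:E * P [set w | history alpha p b w = h])%E.
Local Notation config := (config alpha p).
Local Notation history := (history alpha p).

Definition has_similar_pair (S : {set {set 'I_K}}) :=
  exists A B, [/\ A \in S, B \in S, A != B & sim A B].

Definition false_rejection_at b := [set w | [/\ (config b w).2 = Running,
  (config b.+1 w).2 = Rejected & has_similar_pair (config b w).1]].

Lemma threshold_ge0_le1 : 0 <= alpha / K%:R <= 1.
Proof.
have K_ge1 : 1 <= K%:R :> R by rewrite ler1n.
case/andP: alpha01 => alpha_ge0 alpha_le1; rewrite divr_ge0 ?ler0n //=.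
by rewrite ler_pdivrMr ?mul1r ?(lt_le_trans ltr01) // (le_trans alpha_le1).
Qed.

Lemma measurable_false_rejection_at b : measurable (false_rejection_at b).
Proof.
apply: (fiber_measurable_preimage (f := fun w => (config b w, config b.+1 w))
  [set cc | [/\ cc.1.2 = Running, cc.2.2 = Rejected & has_similar_pair cc.1.1]]).
by apply: fiber_measurable_pair; exact: fiber_measurable_config.
Qed.

Lemma false_rejection_at_le b :
  (P (false_rejection_at b) <= (alpha / K%:R)%:E)%E.
Proof.
have c01 := threshold_ge0_le1; set c := alpha / K%:R in c01 *.
apply: (probability_le_fibers (f := history b)).
- exact: finite_range_history.
- exact: fiber_measurable_history.
- exact: measurable_false_rejection_at.
- by case/andP: c01.
move=> h; set x0 := (initial_clusters K, Running).
have [[run [A [B [Ah Bh AB simAB]]]]|no_false_rejection] :=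
  pselect ((last x0 h).2 = Running /\ has_similar_pair (last x0 h).1).
- apply: (le_trans _ (p_valid b run Ah Bh AB simAB c01)); apply: le_measure; rewrite ?inE.
  + apply: measurableI; last exact: fiber_measurable_history.
    exact: measurable_false_rejection_at.
  + apply: measurableI; last exact: fiber_measurable_history.
    by rewrite -[X in measurable X]setTI; apply: measurable_fun_le.
  move=> w [[run_w rej _] /= hw]; split => //=; apply/ltW.
  have [_ _ below] := config_rejected_step run_w rej.
  by rewrite -hw last_history in Ah Bh; apply: (all_belowP below).
- have -> : false_rejection_at b `&` history b @^-1` [set h] = set0.
    apply/seteqP; split => // w [[run _ sim_pair] /= hw]; apply: no_false_rejection.
    by rewrite -hw last_history.
  by rewrite measure0 mule_ge0 ?lee_fin //; case/andP: c01.
Qed.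

Lemma rejected_with_similar_pair_le :
  (P [set w | (final alpha p w).2 = Rejected /\ has_similar_pair (final alpha p w).1]
    <= alpha%:E)%E.
Proof.
set E := [set w | _ /\ _].
have mE : measurable E :=
  measurable_final alpha p_meas [set c | c.2 = Rejected /\ has_similar_pair c.1].
have cover : E `<=` \big[setU/set0]_(b < K) false_rejection_at b.
  move=> w [rej sim_pair]; have [b bK [run rej_b final_eq]] := rejection_time rej.
  have [eq_b _ _] := config_rejected_step run rej_b.
  rewrite -bigcup_mkord; exists b => //; split => //.
  by rewrite -eq_b -final_eq.
have m_false b : `I_K b -> measurable (false_rejection_at b).
  by move=> _; exact: measurable_false_rejection_at.
apply: le_trans (content_subadditive P m_false mE cover) _.
apply: (@le_trans _ _ (\sum_(b < K) (alpha / K%:R)%:E)%E).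
  by apply: lee_sum => b _; exact: false_rejection_at_le.
rewrite sumEFin sumr_const card_ord lee_fin -[_ *+ K]mulr_natr divfK //.
by rewrite pnatr_eq0 -lt0n.
Qed.

End FalseRejection.

Unset Implicit Arguments.

Theorem theorem4p2 (K : nat) (R : realType) (alpha : R)
  (d : measure_display) (T : measurableType d) (P : probability T R)
  (sim : {set 'I_K} -> {set 'I_K} -> bool)
  (p : nat -> {set 'I_K} -> {set 'I_K} -> T -> R) :
  (2 <= K)%N -> 0 < alpha < 1 ->
  (* similarity is symmetric *)
  (forall A B, sim A B = sim B A) ->
  (* merge invariance *)
  (forall A B D, sim A B -> sim A D -> sim B D -> sim A (B :|: D)) ->
  (* p-values are measurable statistics with values in [0,1] *)
  (forall b A B, measurable_fun [set: T] (p b A B)) ->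
  (forall b A B w, 0 <= p b A B w <= 1) ->
  (* validity, conditionally on the merge history *)
  (forall (b : nat) (h : seq ({set {set 'I_K}} * status)) (A B : {set 'I_K}) (t : R),
     (last (initial_clusters K, Running) h).2 = Running ->
     A \in (last (initial_clusters K, Running) h).1 ->
     B \in (last (initial_clusters K, Running) h).1 ->
     A != B -> sim A B -> 0 <= t <= 1 ->
     (P ([set w | (p b A B w <= t)%R] `&` [set w | history alpha p b w = h])
       <= t%:E * P [set w | history alpha p b w = h])%E) ->
  ((forall i j : 'I_K, i != j -> sim (finset.set1 i) (finset.set1 j)) ->
     (P [set w | (final alpha p w).2 = Rejected] <= alpha%:E)%E)
  /\
  (P [set w | (final alpha p w).2 = Rejected /\
        exists A B, [/\ A \in (final alpha p w).1, B \in (final alpha p w).1,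
                        A != B & sim A B]] <= alpha%:E)%E.
Proof.
(* the range of the p-values is not needed *)
move=> K_ge2 /andP[alpha_gt0 alpha_lt1] simC sim_merge p_meas _ p_valid.
have K_gt0 : (0 < K)%N by apply: leq_trans K_ge2.
have alpha01 : 0 <= alpha <= 1 by rewrite !ltW.
have false_rejection := rejected_with_similar_pair_le K_gt0 alpha01 p_meas p_valid.
split=> // H0.
have sim0 : pairwise_similar sim (initial_clusters K).
  move=> _ _ /imsetP[i _ ->] /imsetP[j _ ->] ij; apply: H0.
  by apply: contraNneq ij => ->.
apply: (le_trans _ false_rejection); apply: le_measure; rewrite ?inE.
- exact: (measurable_final alpha p_meas [set c | c.2 = Rejected]).
- exact: (measurable_final alpha p_meas
    [set c | c.2 = Rejected /\ has_similar_pair sim c.1]).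
move=> w rej; split=> //; rewrite /final in rej *.
have [b _ [run rej_b ->]] := rejection_time rej.
have [-> S_gt1 _] := config_rejected_step run rej_b.
have [A [B [AS BS AB]]] := card_gt1P S_gt1.
exists A, B; split => //.
exact: (config_pairwise_similar simC sim_merge sim0 AS BS AB).
Qed.
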